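(* Let $l\in\mathbb{N}$ and let $G^1,\dots,G^l$ be compatible nontrivial monotonic hypergraph sequences. For $n\in\mathbb{N}$ let $V_n:=V(G^1_n)$, and for $k\in\mathbb{N}$ let $Q^k_n:=(V_n,\binom{V_n}{k})$ and $Q^k=(Q^k_n)_{n\in\mathbb{N}}$. For $x\in\mathbb{R}$ let $M(x)\in\mathbb{N}\cup\{+\infty\}$ be the infimum of all $n\in\mathbb{N}$ with $|V_n|>x$. Then for every real $s>1$ and every $m\in\mathbb{N}_0$, $$\mathrm{vdW}_{l+m}(G^1,\dots,G^l,\underbrace{Q^2,\dots,Q^2}_{m})=\mathrm{vdW}_{l+1}(G^1,\dots,G^l,Q^{m+1})\le\max\Big(M(s\cdot m),\ \mathrm{cr}\big((G^1,\dots,G^l),1-\tfrac1s\big)\Big).$$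
   Context: A finite hypergraph $G=(V,E)$ has finite vertex set $V$ and $E\subseteq\mathcal P(V)$; $\binom{V}{k}$ is the set of $k$-element subsets of $V$. A sequence $(G_n)_{n\in\mathbb{N}}$ of finite hypergraphs is nontrivial monotonic if $V(G_n)\subseteq V(G_{n+1})$, $E(G_n)\subseteq E(G_{n+1})$, $V(G_1)\ne\emptyset$ and $\emptyset\notin E(G_n)$ for all $n$. Sequences $H^1,\dots,H^r$ are compatible if $V(H^1_n)=\dots=V(H^r_n)$ for all $n$. For compatible nontrivial monotonic sequences $H^1,\dots,H^r$, $\mathrm{vdW}_r(H^1,\dots,H^r)\in\mathbb{N}\cup\{+\infty\}$ is the infimum of all $n\in\mathbb{N}$ such that for every map $f:V(H^1_n)\to\{1,\dots,r\}$ there is some $i\in\{1,\dots,r\}$ and some hyperedge of $H^i_n$ all of whose vertices get colour $i$. A set is independent in a hypergraph if it contains no hyperedge. For $q\in\mathbb{R}_{>0}$, $\mathrm{cr}((H^1,\dots,H^r),q)\in\mathbb{N}\cup\{+\infty\}$ is the infimum of all $n\in\mathbb{N}$ such that for all $n'\ge n$ and all $r$-tuples $(S_1,\dots,S_r)$ of pairwise disjoint sets with $S_i$ independent in $H^i_{n'}$ we have $\frac{|S_1|+\dots+|S_r|}{|V(H^1_{n'})|}<q$. Infima of empty sets are $+\infty$. *)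

From HB Require Import structures.
From mathcomp Require Import all_boot all_order all_algebra.
From mathcomp Require Import finmap.
From mathcomp Require Import boolp reals.
Set Implicit Arguments. Unset Strict Implicit. Unset Printing Implicit Defensive.
Import Order.TTheory GRing.Theory Num.Theory.
Local Open Scope fset_scope.

(* Extended naturals N u {+oo}: [Some n] = n, [None] = +oo. *)
Definition enat := option nat.

Definition enat_le (a b : enat) : Prop :=
  match a, b with
  | _, None => True
  | None, Some _ => False
  | Some x, Some y => (x <= y)%N
  end.

Definition enat_max (a b : enat) : enat :=
  match a, b with
  | Some x, Some y => Some (maxn x y)
  | _, _ => None
  end.

Lemma exists_asbool (P : nat -> Prop) : (exists n, P n) -> exists n, `[< P n >].
Proof. by case=> n Pn; exists n; apply/asboolP. Qed.

Definition einf (P : nat -> Prop) : enat :=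
  match pselect (exists n, P n) with
  | left H => Some (ex_minn (exists_asbool H))
  | right _ => None
  end.

Section Hyper.
Variable T : choiceType.

(* A sequence of hypergraphs (G_n)_{n in N} on the common vertex universe T is
   given by its vertex sets V n and its hyperedge predicates E n (a hyperedge is
   a finite subset of T). Only indices n >= 1 are meaningful (N = {1,2,...}). *)

Definition nontrivial_monotonic (V : nat -> {fset T}) (E : nat -> {fset T} -> Prop) : Prop :=
  [/\ (forall n, (1 <= n)%N -> forall e, E n e -> e `<=` V n),
      (forall n, (1 <= n)%N -> V n `<=` V n.+1),
      (forall n, (1 <= n)%N -> forall e, E n e -> E n.+1 e),
      V 1 != fset0 &
      (forall n, (1 <= n)%N -> ~ E n fset0)].

Definition Qk (V : nat -> {fset T}) (k : nat) : nat -> {fset T} -> Prop :=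
  fun n e => e `<=` V n /\ #|` e| = k.

Definition fam_cat (a b : nat) (F : 'I_a -> nat -> {fset T} -> Prop)
  (H : 'I_b -> nat -> {fset T} -> Prop) : 'I_(a + b) -> nat -> {fset T} -> Prop :=
  fun i => match split i with inl j => F j | inr j => H j end.

Definition vdW_prop (r : nat) (V : nat -> {fset T})
  (H : 'I_r -> nat -> {fset T} -> Prop) (n : nat) : Prop :=
  forall f : T -> 'I_r, exists i : 'I_r, exists e, H i n e /\ forall v, v \in e -> f v = i.

Definition vdW (r : nat) (V : nat -> {fset T}) (H : 'I_r -> nat -> {fset T} -> Prop) : enat :=
  einf (fun n => (1 <= n)%N /\ vdW_prop V H n).

Definition independent (E : {fset T} -> Prop) (S : {fset T}) : Prop :=
  forall e, E e -> ~ (e `<=` S).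

Definition cr (R : realType) (r : nat) (V : nat -> {fset T})
  (H : 'I_r -> nat -> {fset T} -> Prop) (q : R) : enat :=
  einf (fun n => (1 <= n)%N /\
    forall n', (n <= n')%N ->
    forall S : 'I_r -> {fset T},
      (forall i, S i `<=` V n') ->
      (forall i j, i != j -> S i `&` S j = fset0) ->
      (forall i, independent (H i n') (S i)) ->
      ((\sum_(i < r) #|` S i|)%:R / #|` V n'|%:R < q)%R).

Definition Mfun (R : realType) (V : nat -> {fset T}) (x : R) : enat :=
  einf (fun n => (1 <= n)%N /\ (x < #|` V n|%:R)%R).

End Hyper.

From HB Require Import structures.
From mathcomp Require Import all_boot all_order all_algebra.
From mathcomp Require Import finmap.
From mathcomp Require Import boolp reals.
From mathcomp Require Import lra.
Set Implicit Arguments. Unset Strict Implicit. Unset Printing Implicit Defensive.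
Import Order.TTheory GRing.Theory Num.Theory.
Local Open Scope fset_scope.

(* Colourings with the m colours of Q^2 and with the single colour of Q^(m+1)
   correspond to each other: merging the m colours, a merged class with m+1
   vertices contains two vertices of equal original colour (pigeonhole), while
   a class with at most m vertices can be recoloured injectively by the m
   colours.  For the bound, take n beyond M(s m) and the critical index: if no
   colour i <= l contains a hyperedge of G^i_n, these colour classes are
   disjoint independent sets covering less than (1 - 1/s)|V_n| vertices, so the
   last class has more than |V_n|/s > m vertices. *)

Lemma einf_le (P : nat -> Prop) n : P n -> enat_le (einf P) (Some n).
Proof.
move=> Pn; rewrite /einf; case: pselect => [H|[]]; last by exists n.
by case: ex_minnP => k _ /=; apply; apply/asboolP.
Qed.

Lemma einf_SomeP (P : nat -> Prop) a : einf P = Some a -> P a.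
Proof. by rewrite /einf; case: pselect => // H [<-]; case: ex_minnP => k /asboolP. Qed.

Lemma eq_einf (P Q : nat -> Prop) : (forall n, P n <-> Q n) -> einf P = einf Q.
Proof. by move=> PQ; congr einf; apply: funext => n; apply/propext/PQ. Qed.

Lemma enat_le_max (x a b : enat) :
  (forall a' b', a = Some a' -> b = Some b' -> enat_le x (Some (maxn a' b'))) ->
  enat_le x (enat_max a b).
Proof. by case: a b => [a'|] [b'|] /=; first exact; case: x. Qed.

Lemma remainder_gt (R : realFieldType) (s : R) (x c m : nat) : (1 < s)%R ->
  (x%:R / (x + c)%:R < 1 - s^-1)%R -> (s * m%:R < (x + c)%:R)%R -> (m < c)%N.
Proof.
move=> s_gt1 dens sm_lt; rewrite -(ltr_nat R).
have s_gt0 : (0 < s)%R by apply: lt_trans s_gt1.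
have N_gt0 : (0 < (x + c)%:R :> R)%R.
  by apply: le_lt_trans sm_lt; rewrite mulr_ge0 // ltW.
rewrite ltr_pdivrMr // mulrBl mul1r natrD in dens; rewrite natrD in sm_lt N_gt0.
(* With [N = x + c], multiplying [x < N - N / s] by [s] gives [N < s c]. *)
have : (x%:R + c%:R < s * c%:R :> R)%R.
  by rewrite -(ltr_pM2l s_gt0) mulrBr mulrA divff ?gt_eqF // mul1r in dens; nra.
nra.
Qed.

Section HypergraphSequences.
Variable T : choiceType.

Lemma fam_cat_lshift a b (F : 'I_a -> nat -> {fset T} -> Prop) H j :
  fam_cat F H (lshift b j) = F j.
Proof. by rewrite /fam_cat -[lshift b j]/(unsplit (inl j)) unsplitK. Qed.

Lemma fam_cat_rshift a b (F : 'I_a -> nat -> {fset T} -> Prop) H (j : 'I_b) :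
  fam_cat F H (rshift a j) = H j.
Proof. by rewrite /fam_cat -[rshift a j]/(unsplit (inr j)) unsplitK. Qed.

Lemma nontrivial_monotonic_fsubset (V : nat -> {fset T})
    (E : nat -> {fset T} -> Prop) a b :
  nontrivial_monotonic V E -> (1 <= a <= b)%N -> V a `<=` V b.
Proof.
case=> _ VS _ _ _ /andP[a_gt0 /subnK <-]; elim: (b - a) => [|k IH] //.
by rewrite addSn (fsubset_trans IH) // VS // (leq_trans a_gt0) ?leq_addl.
Qed.

Lemma exists_fsubset_card (A : {fset T}) k : (k <= #|` A|)%N ->
  exists2 e : {fset T}, e `<=` A & #|` e| = k.
Proof.
move=> k_le; exists [fset x in take k (enum_fset A)].
  by apply/fsubsetP=> x; rewrite in_fset /= => /mem_take.
by rewrite card_fseq undup_id ?size_take_min ?(minn_idPl k_le) // take_uniq.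
Qed.

Lemma fset_pigeonhole (U : choiceType) (e : {fset T}) (D : {fset U}) (h : T -> U) :
  (forall v, v \in e -> h v \in D) -> (#|` D| < #|` e|)%N ->
  exists v1 v2, [/\ v1 \in e, v2 \in e, v1 != v2 & h v1 = h v2].
Proof.
move=> hD ltDe; have [//|noclash] := pselect (exists v1 v2,
  [/\ v1 \in e, v2 \in e, v1 != v2 & h v1 = h v2]).
have /card_in_imfsetP/eqP h_card : {in e &, injective h}.
  by move=> u v ue ve huv; apply/eqP/negPn/negP => nuv; apply: noclash; exists u, v.
have : (#|` h @` e| <= #|` D|)%N.
  by apply/fsubset_leq_card/fsubsetP => _ /imfsetP[v /= ve ->]; apply: hD.
by rewrite h_card leqNgt ltDe.
Qed.

Definition colour_class r (A : {fset T}) (f : T -> 'I_r) j : {fset T} :=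
  [fset v in A | f v == j].

Lemma in_colour_class r A (f : T -> 'I_r) j v :
  (v \in colour_class A f j) = (v \in A) && (f v == j).
Proof. by rewrite !inE. Qed.

Lemma colour_class_sub r A (f : T -> 'I_r) j : colour_class A f j `<=` A.
Proof. by apply/fsubsetP => v; rewrite in_colour_class => /andP[]. Qed.

Lemma colour_classI r A (f : T -> 'I_r) j1 j2 :
  j1 != j2 -> colour_class A f j1 `&` colour_class A f j2 = fset0.
Proof.
move=> j12; apply/fsetP => v; rewrite in_fsetI !in_colour_class in_fset0.
by case: (f v =P j1) => [->|]; rewrite ?(negPf j12) !andbF.
Qed.

Lemma card_colour_classes r A (f : T -> 'I_r) :
  #|` A| = \sum_(j < r) #|` colour_class A f j|.
Proof.
rewrite -sum1_size (partition_big f xpredT) //; apply: eq_bigr => j _.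
by rewrite sum1_count /colour_class card_imfset //= size_filter.
Qed.

Lemma Qk_colour_class V n k r (f : T -> 'I_r) j :
  (k <= #|` colour_class (V n) f j|)%N ->
  exists e, Qk V k n e /\ forall v, v \in e -> f v = j.
Proof.
move=> /exists_fsubset_card[e eS ce]; exists e; split.
  by split=> //; apply: fsubset_trans eS (colour_class_sub _ _ _).
by move=> v /(fsubsetP eS); rewrite in_colour_class => /andP[_ /eqP].
Qed.

Section Recolouring.
Variables (l m n : nat) (V : nat -> {fset T}) (G : 'I_l -> nat -> {fset T} -> Prop).

Lemma vdW_prop_Q2_Qsucc : (0 < l)%N -> (forall i e, G i n e -> e `<=` V n) ->
  vdW_prop V (fam_cat G (fun _ : 'I_m => Qk V 2)) n ->
  vdW_prop V (fam_cat G (fun _ : 'I_1 => Qk V m.+1)) n.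
Proof.
move=> l_gt0 G_sub vdW2 f; pose S := colour_class (V n) f (rshift l ord0).
have [bigS|smallS] := leqP m.+1 #|` S|.
  have [e [Qe mono]] := Qk_colour_class bigS.
  by exists (rshift l ord0), e; rewrite fam_cat_rshift.
(* Recolour the last class injectively with the [m] extra colours. *)
pose g v : 'I_(l + m) := insubd (lshift m (Ordinal l_gt0))
  (if v \in S then l + index v (enum_fset S) else val (f v))%N.
have g_in_S v : v \in S -> val (g v) = (l + index v (enum_fset S))%N.
  move=> vS; rewrite val_insubd vS ltn_add2l.
  by rewrite (leq_trans _ (smallS : #|` S| <= m)) // index_mem.
have g_notin_S v : v \in V n -> v \notin S ->
    val (g v) = val (f v) /\ (val (f v) < l)%N.
  move=> vV vS; have fv : f v != rshift l ord0 by move: vS; rewrite in_colour_class vV.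
  have fv_lt : (val (f v) < l)%N.
    by case: (split_ordP (f v)) fv => [j -> // | k ->]; rewrite (ord1 k) eqxx.
  by rewrite val_insubd (negPf vS) (ltn_addr _ fv_lt).
have g_inj : {in S &, injective g}.
  by move=> u v uS vS /(congr1 val); rewrite !g_in_S // => /addnI; apply: index_inj.
have [i [e [He mono]]] := vdW2 g.
case: (split_ordP i) He mono => [j -> | k ->].
  rewrite fam_cat_lshift => He mono; exists (lshift 1 j), e.
  rewrite fam_cat_lshift; split=> // v ve; have /= gv := congr1 val (mono v ve).
  have vV := fsubsetP (G_sub _ _ He) v ve.
  case vS: (v \in S).
    by move: (ltn_ord j); rewrite -gv g_in_S // ltnNge leq_addr.
  by apply: val_inj; have [<- _] := g_notin_S v vV (negbT vS).
rewrite fam_cat_rshift => -[eV ce] mono; exfalso.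
have eS v : v \in e -> v \in S.
  move=> ve; apply: contraT => vS; have gv := congr1 val (mono v ve).
  have [gf fv_lt] := g_notin_S v (fsubsetP eV v ve) vS.
  by move: fv_lt; rewrite -gf gv /= ltnNge leq_addr.
have eD v : v \in e -> g v \in [fset rshift l k].
  by move=> ve; rewrite mono // in_fset1.
have [|v1 [v2 [v1e v2e /eqP v12 gv12]]] := fset_pigeonhole eD.
  by rewrite cardfs1 ce.
by apply/v12/g_inj; rewrite ?eS.
Qed.

Lemma vdW_prop_Qsucc_Q2 :
  vdW_prop V (fam_cat G (fun _ : 'I_1 => Qk V m.+1)) n ->
  vdW_prop V (fam_cat G (fun _ : 'I_m => Qk V 2)) n.
Proof.
(* Merge the [m] extra colours into a single one. *)
move=> vdWs g; pose f v : 'I_(l + 1) := insubd (rshift l ord0) (val (g v)).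
have f_lt_l v : (val (f v) < l)%N -> val (f v) = val (g v).
  by rewrite val_insubd; case: ifP => //= _; rewrite addn0 ltnn.
have f_last v : val (f v) = l -> (l <= val (g v))%N.
  rewrite val_insubd; case: ltnP => [_ -> // | ge_l1 _].
  exact: leq_trans (leq_addr 1 l) ge_l1.
have [i [e [He mono]]] := vdWs f.
case: (split_ordP i) He mono => [j -> | k ->].
  rewrite fam_cat_lshift => He mono; exists (lshift m j), e.
  rewrite fam_cat_lshift; split=> // v /mono /(congr1 val) fv.
  by apply: val_inj; rewrite -f_lt_l fv // /=.
rewrite fam_cat_rshift (ord1 k) => -[eV ce] mono.
have ge_l v : v \in e -> (l <= val (g v))%N.
  by move=> /mono /(congr1 val) /=; rewrite addn0 => /f_last.
have eD v : v \in e -> val (g v) \in [fset x in iota l m].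
  by move=> ve; rewrite in_fset /= mem_iota ge_l // ltn_ord.
have [|v1 [v2 [v1e v2e v12 gv]]] := fset_pigeonhole eD.
  by rewrite card_fseq undup_id ?iota_uniq // size_iota ce.
case: (split_ordP (g v1)) (ge_l v1 v1e) => [j -> | c gv1].
  by rewrite /= leqNgt ltn_ord.
exists (rshift l c), [fset v1; v2]; rewrite fam_cat_rshift; split.
  split; last by rewrite cardfs2 v12.
  by apply/fsubsetP => v; rewrite in_fset2 => /orP[] /eqP ->; apply: (fsubsetP eV).
move=> v; rewrite in_fset2 => /orP[] /eqP -> //.
by rewrite -gv1; apply: val_inj.
Qed.

End Recolouring.

Lemma vdW_prop_Qsucc_of_density (R : realFieldType) (s : R) l m n
    (V : nat -> {fset T}) (G : 'I_l -> nat -> {fset T} -> Prop) :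
  (1 < s)%R -> (s * m%:R < #|` V n|%:R)%R ->
  (forall S : 'I_l -> {fset T}, (forall i, S i `<=` V n) ->
     (forall i j, i != j -> S i `&` S j = fset0) ->
     (forall i, independent (G i n) (S i)) ->
     ((\sum_(i < l) #|` S i|)%:R / #|` V n|%:R < 1 - s^-1)%R) ->
  vdW_prop V (fam_cat G (fun _ : 'I_1 => Qk V m.+1)) n.
Proof.
move=> s_gt1 sm_lt density f.
have [[i [e [He mono]]]|noG] :=
  pselect (exists i e, G i n e /\ forall v, v \in e -> f v = lshift 1 i).
  by exists (lshift 1 i), e; rewrite fam_cat_lshift.
pose S i := colour_class (V n) f (lshift 1 i).
have S_indep i : independent (G i n) (S i).
  move=> e He /fsubsetP eS; apply: noG; exists i, e; split=> // v /eS.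
  by rewrite in_colour_class => /andP[_ /eqP].
have S_disj i j : i != j -> S i `&` S j = fset0.
  by move=> ij; apply: colour_classI; rewrite (inj_eq (@lshift_inj _ _)).
have := density S (fun i => colour_class_sub _ _ _) S_disj S_indep.
rewrite (card_colour_classes (V n) f) big_split_ord big_ord1 in sm_lt * => dens.
have [e [Qe mono]] := Qk_colour_class (remainder_gt s_gt1 dens sm_lt).
by exists (rshift l ord0), e; rewrite fam_cat_rshift.
Qed.

End HypergraphSequences.

Theorem theorem1 (T : choiceType) (l : nat) (V : nat -> {fset T})
  (G : 'I_l -> nat -> {fset T} -> Prop)
  (hl : (0 < l)%N)
  (hG : forall i, nontrivial_monotonic V (G i))
  (R : realType) (s : R) (hs : (1 < s)%R) (m : nat) :
  vdW V (fam_cat G (fun _ : 'I_m => Qk V 2))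
    = vdW V (fam_cat G (fun _ : 'I_1 => Qk V m.+1))
  /\ enat_le (vdW V (fam_cat G (fun _ : 'I_1 => Qk V m.+1)))
             (enat_max (Mfun V (s * m%:R)%R) (cr V G (1 - s^-1)%R)).
Proof.
have G_sub n : (1 <= n)%N -> forall i e, G i n e -> e `<=` V n.
  by move=> n_gt0 i; case: (hG i) => + _ _ _ _; apply.
split.
  apply: eq_einf => n; split=> -[n_gt0 vdWn]; split=> //.
    exact: vdW_prop_Q2_Qsucc hl (G_sub n n_gt0) vdWn.
  exact: vdW_prop_Qsucc_Q2 vdWn.
apply: enat_le_max => a b /einf_SomeP[a_gt0 Va_gt] /einf_SomeP[_ cr_b].
have n_gt0 : (0 < maxn a b)%N by rewrite (leq_trans a_gt0) ?leq_maxl.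
apply: einf_le; split=> //; apply: vdW_prop_Qsucc_of_density hs _ (cr_b _ (leq_maxr a b)).
apply: lt_le_trans Va_gt _; rewrite ler_nat fsubset_leq_card //.
by apply: (nontrivial_monotonic_fsubset (hG (Ordinal hl))); rewrite a_gt0 leq_maxl.
Qed.
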